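(* Let $d$ be an integer and let $G$ be a finite connected $d$-regular simple graph containing no cycle of length $3$ and no cycle of length $5$ as a subgraph. If $uv$ is an edge of $G$ with $\kappa_{LLY}(u,v)>0$, then there is a perfect matching between $N(u)\setminus\{v\}$ and $N(v)\setminus\{u\}$ using edges of $G$.
   Context: For vertices $u,v$ of a connected graph $G$, $d(u,v)$ is the graph distance, $N(v)$ is the neighborhood of $v$, $d_v=|N(v)|$. For $0\le\alpha<1$, the $\alpha$-lazy random walk is $m_x^\alpha(x)=\alpha$, $m_x^\alpha(v)=(1-\alpha)/d_x$ for $v\in N(x)$, $m_x^\alpha(v)=0$ otherwise. The transportation distance between probability distributions $m_1,m_2$ on $V(G)$ is $W(m_1,m_2)=\inf_A\sum_{x,y}A(x,y)d(x,y)$ over couplings $A:V\times V\to[0,1]$ with $\sum_yA(x,y)=m_1(x)$, $\sum_xA(x,y)=m_2(y)$. For distinct $x,y$, $\kappa_\alpha(x,y)=1-W(m_x^\alpha,m_y^\alpha)/d(x,y)$ and $\kappa_{LLY}(x,y)=\lim_{\alpha\to1}\kappa_\alpha(x,y)/(1-\alpha)$. *)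

From HB Require Import structures.
From mathcomp Require Import all_boot all_order all_algebra.
From mathcomp Require Import all_classical all_reals all_analysis.
Set Implicit Arguments. Unset Strict Implicit. Unset Printing Implicit Defensive.
Import Order.TTheory GRing.Theory Num.Theory numFieldNormedType.Exports.
Local Open Scope classical_set_scope.
Local Open Scope ring_scope.

Section Graphs.
Variable T : finType.
Variable e : rel T.

Definition simple_graph : Prop := symmetric e /\ irreflexive e.
Definition connected_graph : Prop := forall x y : T, connect e x y.
Definition nbhd (x : T) : {set T} := [set y | e x y].
Definition regular (d : nat) : Prop := forall x : T, #|nbhd x| = d.

Definition no_C3 : Prop :=
  forall a b c : T, uniq [:: a; b; c] -> ~ [&& e a b, e b c & e c a].
Definition no_C5 : Prop :=
  forall a b c d f : T, uniq [:: a; b; c; d; f] ->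
    ~ [&& e a b, e b c, e c d, e d f & e f a].

Definition walkn (n : nat) (x y : T) : bool :=
  [exists p : n.-tuple T, path e x p && (last x p == y)].

(* graph distance: least n with a walk of length n from x to y
   (for a connected graph this is < #|T|; default #|T| otherwise) *)
Definition gdist (x y : T) : nat := find (fun n => walkn n x y) (iota 0 #|T|).

Definition couplings (R : realType) (m1 m2 : T -> R) : set (T -> T -> R) :=
  [set A | (forall x y, 0 <= A x y <= 1) /\
           (forall x, \sum_(y : T) A x y = m1 x) /\
           (forall y, \sum_(x : T) A x y = m2 y)].

Definition Wdist (R : realType) (m1 m2 : T -> R) : R :=
  inf [set c : R | exists2 A, couplings m1 m2 A &
         c = \sum_(x : T) \sum_(y : T) A x y * (gdist x y)%:R].

Definition lazy_walk (R : realType) (alpha : R) (x : T) : T -> R :=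
  fun v => if v == x then alpha
           else if e x v then (1 - alpha) / (#|nbhd x|)%:R else 0.

Definition kappa_alpha (R : realType) (alpha : R) (x y : T) : R :=
  1 - Wdist (lazy_walk alpha x) (lazy_walk alpha y) / (gdist x y)%:R.

Definition kappa_LLY (R : realType) (x y : T) : R :=
  let f : R -> R := fun alpha => kappa_alpha alpha x y / (1 - alpha) in
  lim (f @ at_left (1 : R)).

Definition perfect_matching_between (A B : {set T}) : Prop :=
  exists f : T -> T,
    [/\ {in A, forall a, f a \in B /\ e a (f a)},
        {in A &, injective f} &
        {in B, forall b, exists2 a, a \in A & f a = b}].

End Graphs.

(* If Hall's condition fails for N(u) \ {v} and N(v) \ {u}, pick a deficient
   S in N(u) \ {v}: fewer than |S| vertices of N(v) \ {u} have a neighbour in S.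
   The potential equal to 2 at u, 3 on S, 2 on the neighbours of S in N(v) \ {u},
   0 on the rest of N(v) \ {u} and 1 elsewhere is 1-Lipschitz from N[u] to N[v]:
   the only delicate pair is S against its non-neighbours in N(v) \ {u}, which
   lie at distance at least 3 because a common neighbour would close a triangle
   or a pentagon through u and v. Its mean under the lazy walk from u exceeds its
   mean under the lazy walk from v by at least 1, so by the easy half of
   Kantorovich duality W(m_u, m_v) >= 1 = d(u, v) for every laziness, hence
   kappa_LLY(u, v) <= 0. Otherwise Hall's theorem gives a matching, which is
   perfect since both sides have d - 1 vertices. *)

From mathcomp Require Import all_boot all_order all_algebra.
From mathcomp Require Import all_classical all_reals all_analysis.
(* Re-imported last so that finset names (subsetP, set0, ...) shadow classical_sets ones. *)
From mathcomp Require Import fintype finset zify lra.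
Set Implicit Arguments.
Unset Strict Implicit.
Unset Printing Implicit Defensive.
Import Order.TTheory GRing.Theory Num.Theory numFieldNormedType.Exports.

Section Hall.
Variables (T : finType) (r : rel T).
Implicit Types (A B C S : {set T}) (a b : T).

Definition nbhd_in B S : {set T} :=
  [set b in B | [exists a in S, r a b]].

Definition matching_into A B (f : T -> T) : Prop :=
  {in A, forall a, f a \in B /\ r a (f a)} /\ {in A &, injective f}.

Definition hall_condition A B : Prop :=
  forall S, S \subset A -> #|S| <= #|nbhd_in B S|.

Lemma nbhd_in_sub B S : nbhd_in B S \subset B.
Proof. by apply/subsetP=> b; rewrite inE => /andP[]. Qed.

Lemma nbhd_inU B S1 S2 : nbhd_in B (S1 :|: S2) = nbhd_in B S1 :|: nbhd_in B S2.
Proof.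
apply/setP=> b; rewrite !inE -andb_orr; congr (_ && _).
apply/existsP/orP => [[a /andP[]]|[]/existsP[a /andP[aS rab]]].
- by rewrite inE => /orP[] aS rab; [left|right]; apply/existsP; exists a; rewrite aS.
- by exists a; rewrite inE aS.
- by exists a; rewrite inE aS orbT.
Qed.

Lemma nbhd_inD B C S : nbhd_in (B :\: C) S = nbhd_in B S :\: C.
Proof. by apply/setP=> b; rewrite !inE andbA. Qed.

Lemma nbhd_in_nbhd_in B S S' : S' \subset S -> nbhd_in (nbhd_in B S) S' = nbhd_in B S'.
Proof.
move=> S'S; apply/setP=> b; rewrite !inE.
apply/andP/andP=> [[/andP[bB _] //]|[bB ex]]; split=> //; rewrite bB.
by case/existsP: ex => a /andP[aS' rab]; apply/existsP; exists a; rewrite (subsetP S'S).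
Qed.

Lemma matching_into0 B f : matching_into set0 B f.
Proof. by split=> [a|a]; rewrite inE. Qed.

Lemma matching_into1 a b : r a b -> matching_into [set a] [set b] (fun=> b).
Proof. by move=> rab; split=> [x|x y]; rewrite !inE => /eqP-> //; move=> /eqP->. Qed.

Lemma matching_glue A1 A2 B1 B2 f1 f2 :
  [disjoint B1 & B2] -> matching_into A1 B1 f1 -> matching_into A2 B2 f2 ->
  matching_into (A1 :|: A2) (B1 :|: B2) (fun a => if a \in A1 then f1 a else f2 a).
Proof.
move=> B12 [f1B f1inj] [f2B f2inj]; split=> [a|x y].
  rewrite inE; case: ifP => [aA1 _|_ /= aA2].
    by have [fB ->] := f1B a aA1; rewrite inE fB.
  by have [fB ->] := f2B a aA2; rewrite inE fB orbT.
have sep x1 x2 : x1 \in A1 -> x2 \in A2 -> f1 x1 != f2 x2.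
  move=> /f1B[f1x _] /f2B[f2x _]; apply/eqP=> E.
  by move: (disjointFr B12 f1x); rewrite E f2x.
rewrite !inE; case: ifP => xA1; case: ifP => yA1 /= xA yA.
- exact: f1inj.
- by move=> E; move: (sep _ _ xA1 yA); rewrite E eqxx.
- by move=> E; move: (sep _ _ yA1 xA); rewrite E eqxx.
- exact: f2inj.
Qed.

Lemma hall_condition_tight A B S :
  S \subset A -> #|nbhd_in B S| <= #|S| -> hall_condition A B ->
  hall_condition S (nbhd_in B S) /\ hall_condition (A :\: S) (B :\: nbhd_in B S).
Proof.
move=> SA tight hallAB; split=> [S' S'S|S' S'AS].
  by rewrite nbhd_in_nbhd_in //; apply/hallAB/(subset_trans S'S).
have S'S0 : S' :&: S = set0.
  apply/setP=> x; rewrite !inE; apply/negP=> /andP[/(subsetP S'AS)].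
  by rewrite inE => /andP[/negPf ->].
have := hallAB (S' :|: S); rewrite subUset SA (subset_trans S'AS) ?subsetDl //.
rewrite nbhd_inD nbhd_inU cardsU cardsD cardsU S'S0 cards0 => /(_ isT).
lia.
Qed.

Lemma hall_condition_loose A B a b :
  (forall S, S \subset A :\ a -> S != set0 -> #|S| < #|nbhd_in B S|) ->
  hall_condition (A :\ a) (B :\ b).
Proof.
move=> loose S SAa; have [->|S0] := eqVneq S set0; first by rewrite cards0.
have := loose S SAa S0; rewrite nbhd_inD (cardsD1 b (nbhd_in B S)); lia.
Qed.

Theorem hall A B : hall_condition A B -> exists f, matching_into A B f.
Proof.
have [n] := ubnP #|A|; elim: n A B => // n IH A B ltAn hallAB.
have [->|[a aA]] := set_0Vmem A; first by exists id; apply: matching_into0.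
(* Either a nonempty S avoiding a is tight and the problem splits along S,
   or every such S has a spare neighbour and any edge at a can be matched first. *)
case: (boolP [exists S : {set T}, [&& S \subset A :\ a, S != set0 & #|nbhd_in B S| <= #|S|]]).
  case/existsP=> S /and3P[SAa S0 tight].
  have SA : S \subset A by apply: subset_trans SAa (subsetDl _ _).
  have ltSA : #|S| < #|A| by apply: proper_card; apply: sub_proper_trans SAa (properD1 aA).
  have [hallS hallAS] := hall_condition_tight SA tight hallAB.
  have [f1 f1m] := IH _ _ (leq_trans ltSA ltAn) hallS.
  have [f2 f2m] : exists f, matching_into (A :\: S) (B :\: nbhd_in B S) f.
    apply: IH hallAS; rewrite cardsD (setIidPr SA); move: S0; rewrite -card_gt0; lia.
  exists (fun x => if x \in S then f1 x else f2 x).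
  rewrite -(setID A S) -(setID B (nbhd_in B S)) (setIidPr SA) (setIidPr (nbhd_in_sub _ _)).
  by apply: matching_glue f1m f2m; rewrite disjoint_sym disjoints_subset setDE subsetIr.
move/existsPn=> loose.
have [b bB rab] : exists2 b, b \in B & r a b.
  have := hallAB [set a]; rewrite sub1set aA cards1 card_gt0 => /(_ isT) /set0Pn[b].
  by rewrite inE => /andP[bB /existsP[x /andP[/set1P -> rab]]]; exists b.
have [f fm] : exists f, matching_into (A :\ a) (B :\ b) f.
  apply: IH; first by move: ltAn; rewrite (cardsD1 a) aA; lia.
  apply: hall_condition_loose => S SAa S0; move: (loose S); rewrite SAa S0 /=; lia.
exists (fun x => if x \in [set a] then b else f x).
rewrite -(setD1K aA) -(setD1K bB).
by apply: matching_glue (matching_into1 rab) fm; rewrite disjoints1 !inE eqxx.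
Qed.

Lemma perfect_matching_of_card A B f :
  matching_into A B f -> #|A| = #|B| -> perfect_matching_between r A B.
Proof.
move=> [fAB finj] cardAB; exists f; split=> // b.
have /eqP <- : f @: A == B.
  rewrite eqEcard (card_in_imset finj) cardAB leqnn andbT.
  by apply/subsetP=> _ /imsetP[a aA ->]; have [] := fAB a aA.
by case/imsetP=> a aA ->; exists a.
Qed.

End Hall.

Section Distance.
Variables (T : finType) (e : rel T).
Implicit Types x y z : T.

Lemma uniq_size_le_card (s : seq T) : uniq s -> size s <= #|T|.
Proof. by move=> /card_uniqP <-; apply: max_card. Qed.

Lemma walkn0 x y : walkn e 0 x y = (x == y).
Proof.
apply/existsP/eqP=> [[t]|<-]; last by exists [tuple]; rewrite /= eqxx.
by rewrite tuple0 /= => /eqP.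
Qed.

Lemma walkn1 x y : walkn e 1 x y = e x y.
Proof.
apply/existsP/idP=> [[t]|exy]; last by exists [tuple y]; rewrite /= exy eqxx.
by case/tupleP: t => z t; rewrite tuple0 /= andbT => /andP[exz /eqP <-].
Qed.

Lemma walkn2P x y : reflect (exists2 z, e x z & e z y) (walkn e 2 x y).
Proof.
apply: (iffP existsP)=> [[t]|[z exz ezy]]; last first.
  by exists [tuple z; y]; rewrite /= exz ezy eqxx.
case/tupleP: t => z t; case/tupleP: t => w t.
by rewrite tuple0 /= andbT => /andP[/andP[exz ezw] /eqP <-]; exists z.
Qed.

Lemma gdist_ge n x y : n <= #|T| -> (forall k, k < n -> ~~ walkn e k x y) ->
  n <= gdist e x y.
Proof.
move=> lenT nowalk; rewrite /gdist leqNgt -has_take_leq ?size_iota //.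
by apply/hasPn=> k; rewrite take_iota mem_iota add0n => /andP[_ ltk]; apply: nowalk; lia.
Qed.

Lemma gdist_ge1 x y : x != y -> 0 < gdist e x y.
Proof.
move=> xy; apply: gdist_ge => [|[|//] _]; last by rewrite walkn0.
by apply: (@uniq_size_le_card [:: x]).
Qed.

Lemma gdist_ge2 x y : x != y -> ~~ e x y -> 1 < gdist e x y.
Proof.
move=> xy nexy; apply: gdist_ge => [|[|[|//]] _]; rewrite ?walkn0 ?walkn1 //.
by apply: (@uniq_size_le_card [:: x; y]); rewrite /= inE xy.
Qed.

Lemma gdist_ge3 x y : 2 < #|T| -> x != y -> ~~ e x y ->
  (forall z, e x z -> ~~ e z y) -> 2 < gdist e x y.
Proof.
move=> ltT xy nexy nomid; apply: gdist_ge => // -[|[|[|//]]] _; rewrite ?walkn0 ?walkn1 //.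
by apply/walkn2P=> -[z /nomid/negPf ->].
Qed.

Lemma gdist_edge x y : x != y -> e x y -> gdist e x y = 1.
Proof.
move=> xy exy; apply/eqP; rewrite eqn_leq gdist_ge1 // andbT.
have leT : 2 <= #|T| by apply: (@uniq_size_le_card [:: x; y]); rewrite /= inE xy.
rewrite /gdist -ltnS -has_take_leq ?size_iota //.
by apply/hasP; exists 1; rewrite ?walkn1 // take_iota mem_iota; lia.
Qed.

End Distance.

Section Transport.
Variables (R : realType) (T : finType) (e : rel T).
Implicit Types (a : R) (m : T -> R) (x y : T).
Local Open Scope ring_scope.

Lemma lim_le0 (U : Type) (F : set_system U) {FF : ProperFilter F}
  (f : U -> R) : (\forall t \near F, f t <= 0) -> lim (f @ F)%classic <= 0.
Proof.
(* When f diverges, [lim] returns the default point 0. *)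
move=> f_le0; have [cvgf|ncvgf] := pselect (cvg (f @ F)%classic); first exact: limr_le.
by rewrite /lim /lim_in getPN // => l fl; apply: ncvgf; apply/cvg_ex; exists l.
Qed.

Lemma ler_sum_term m x : (forall y, 0 <= m y) -> m x <= \sum_y m y.
Proof. by move=> m_ge0; rewrite (bigD1 x) //= lerDl sumr_ge0. Qed.

Lemma product_coupling m1 m2 :
  (forall x, 0 <= m1 x) -> (forall y, 0 <= m2 y) ->
  \sum_x m1 x = 1 -> \sum_y m2 y = 1 ->
  couplings m1 m2 (fun x y => m1 x * m2 y).
Proof.
move=> m1_ge0 m2_ge0 m1_sum m2_sum; split; [|split].
- move=> x y; rewrite mulr_ge0 //= mulr_ile1 //.
    by rewrite -m1_sum ler_sum_term.
  by rewrite -m2_sum ler_sum_term.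
- by move=> x; rewrite -mulr_sumr m2_sum mulr1.
- by move=> y; rewrite -mulr_suml m1_sum mul1r.
Qed.

Lemma coupling_cost_ge_potential m1 m2 A (g : T -> R) :
  couplings m1 m2 A ->
  (forall x y, m1 x != 0 -> m2 y != 0 -> g x - g y <= (gdist e x y)%:R) ->
  \sum_x g x * m1 x - \sum_y g y * m2 y <= \sum_x \sum_y A x y * (gdist e x y)%:R.
Proof.
move=> [A01 [A_m1 A_m2]] lip.
have A_ge0 x y : 0 <= A x y by case/andP: (A01 x y).
have -> : \sum_x g x * m1 x - \sum_y g y * m2 y = \sum_x \sum_y A x y * (g x - g y).
  under eq_bigr do rewrite -A_m1 mulr_sumr.
  under [X in _ - X]eq_bigr do rewrite -A_m2 mulr_sumr.
  rewrite [X in _ - X]exchange_big -sumrB; apply: eq_bigr => x _.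
  by rewrite -sumrB; apply: eq_bigr => y _; rewrite mulrBr mulrC [g y * _]mulrC.
apply: ler_sum => x _; apply: ler_sum => y _.
have [m1x0|m1x] := eqVneq (m1 x) 0.
  by rewrite (psumr_eq0P (fun y _ => A_ge0 x y) (etrans (A_m1 x) m1x0)) // !mul0r.
have [m2y0|m2y] := eqVneq (m2 y) 0.
  by rewrite (psumr_eq0P (fun x _ => A_ge0 x y) (etrans (A_m2 y) m2y0)) // !mul0r.
exact/ler_wpM2l/lip.
Qed.

Lemma Wdist_ge_potential m1 m2 (g : T -> R) :
  (forall x, 0 <= m1 x) -> (forall y, 0 <= m2 y) ->
  \sum_x m1 x = 1 -> \sum_y m2 y = 1 ->
  (forall x y, m1 x != 0 -> m2 y != 0 -> g x - g y <= (gdist e x y)%:R) ->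
  \sum_x g x * m1 x - \sum_y g y * m2 y <= Wdist e m1 m2.
Proof.
move=> m1_ge0 m2_ge0 m1_sum m2_sum lip; apply: lb_le_inf.
  by eexists; exists (fun x y => m1 x * m2 y); first exact: product_coupling.
by move=> _ [A cA ->]; apply: coupling_cost_ge_potential.
Qed.

Lemma lazy_walk_ge0 a x y : 0 <= a <= 1 -> 0 <= lazy_walk e a x y.
Proof.
case/andP=> a0 a1; rewrite /lazy_walk; case: eqP => // _; case: (e x y) => //.
by rewrite divr_ge0 ?subr_ge0.
Qed.

Lemma lazy_walk_supp a x y : lazy_walk e a x y != 0 -> (y == x) || e x y.
Proof. by rewrite /lazy_walk; case: ifP => // _; case: ifP; rewrite ?eqxx. Qed.

Lemma sum_lazy_walk (h : T -> R) a x : irreflexive e ->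
  \sum_y h y * lazy_walk e a x y =
  a * h x + (1 - a) / #|nbhd e x|%:R * \sum_(y in nbhd e x) h y.
Proof.
move=> e_irr; rewrite (bigD1 x) //= /lazy_walk eqxx mulrC; congr (_ + _).
rewrite mulr_sumr big_mkcond [RHS]big_mkcond; apply: eq_bigr => y _ /=.
rewrite inE; case: eqP => [->|_]; first by rewrite e_irr.
by case: (e x y); rewrite ?mulr0 // mulrC.
Qed.

Lemma lazy_walk_sum1 a x : irreflexive e -> (0 < #|nbhd e x|)%N ->
  \sum_y lazy_walk e a x y = 1.
Proof.
move=> e_irr nbhd_gt0; have := sum_lazy_walk (fun=> 1) a x e_irr.
under eq_bigr do rewrite mul1r.
by move=> ->; rewrite sumr_const divfK ?pnatr_eq0 -?lt0n // mulr1 addrC subrK.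
Qed.

Lemma kappa_LLY_le0 x y : (0 < gdist e x y)%N ->
  (forall a, 0 <= a < 1 ->
     (gdist e x y)%:R <= Wdist e (lazy_walk e a x) (lazy_walk e a y)) ->
  kappa_LLY e R x y <= 0.
Proof.
move=> dist_gt0 W_ge; apply: lim_le0; near=> a.
have a0 : 0 <= a by near: a; exact: nbhs_left_ge ltr01.
have a1 : a < 1 by near: a; exact: nbhs_left_lt.
apply: mulr_le0_ge0; last by rewrite invr_ge0 subr_ge0 ltW.
by rewrite subr_le0 ler_pdivlMr ?ltr0n // mul1r W_ge // a0 a1.
Unshelve. all: end_near.
Qed.

End Transport.

Section DeficientSet.
Variables (T : finType) (e : rel T).
Hypotheses (e_sym : symmetric e) (e_irr : irreflexive e).
Hypotheses (noC3 : no_C3 e) (noC5 : no_C5 e).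
Implicit Types x y z : T.

Lemma edge_neq x y : e x y -> x != y.
Proof. by apply: contraTneq => ->; rewrite e_irr. Qed.

Lemma no_triangle x y z : e x y -> e y z -> e z x -> False.
Proof.
move=> exy eyz ezx; apply: (noC3 (a := x) (b := y) (c := z)); last by rewrite exy eyz ezx.
by rewrite /= !inE !negb_or (edge_neq exy) (edge_neq eyz) eq_sym (edge_neq ezx).
Qed.

Lemma card_nbhdD1 d x y : regular e d -> e x y -> #|nbhd e x :\ y| = d.-1.
Proof. by move=> reg exy; move: (cardsD1 y (nbhd e x)); rewrite inE exy reg => ->. Qed.

Variables (u v : T) (S : {set T}).
Hypotheses (euv : e u v) (SA : S \subset nbhd e u :\ v).

Local Notation A := (nbhd e u :\ v).
Local Notation B := (nbhd e v :\ u).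
Local Notation NS := (nbhd_in e B S).

Definition potential x : nat :=
  if x == u then 2 else if x \in S then 3 else if x \in NS then 2 else if x \in B then 0 else 1.

Lemma B_nadj_u y : y \in B -> ~~ e u y.
Proof.
rewrite !inE => /andP[_ evy]; apply/negP=> euy.
by apply: (@no_triangle u y v euy); rewrite e_sym.
Qed.

Lemma A_notin_B x : x \in A -> x \notin B.
Proof. by move=> xA; apply/negP=> /B_nadj_u; move: xA; rewrite !inE => /andP[_ ->]. Qed.

Lemma S_adj_u x : x \in S -> e u x.
Proof. by move/(subsetP SA); rewrite !inE => /andP[]. Qed.

Lemma S_neq_v x : x \in S -> x != v.
Proof. by move/(subsetP SA); rewrite !inE => /andP[]. Qed.

Lemma S_nadj_v x : x \in S -> ~~ e x v.
Proof. by move=> xS; apply/negP=> exv; apply: (no_triangle (S_adj_u xS) exv); rewrite e_sym. Qed.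

Lemma S_notin_B x : x \in S -> x \notin B.
Proof. by move/(subsetP SA); apply: A_notin_B. Qed.

Lemma potential_u : potential u = 2.
Proof. by rewrite /potential eqxx. Qed.

Lemma potential_v : potential v = 1.
Proof.
have vB : v \notin B by rewrite !inE e_irr andbF.
have vS : v \notin S by apply/negP=> /(subsetP SA); rewrite !inE eqxx.
have vNS : v \notin NS by apply: contraNN vB; apply/subsetP/nbhd_in_sub.
by rewrite /potential eq_sym (negPf (edge_neq euv)) (negPf vS) (negPf vNS) (negPf vB).
Qed.

Lemma potential_S x : x \in S -> potential x = 3.
Proof. by move=> xS; rewrite /potential xS eq_sym (negPf (edge_neq (S_adj_u xS))). Qed.

Lemma potential_nbhd_u x : e u x -> x \notin S -> potential x = 1.
Proof.
move=> eux xS; have xB : x \notin B by apply: contraTN eux => /B_nadj_u.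
rewrite /potential eq_sym (negPf (edge_neq eux)) (negPf xS) (negPf xB).
by rewrite ifN //; apply: contraNN xB; apply/subsetP/nbhd_in_sub.
Qed.

Lemma potential_ge2 y : y != v -> y \notin B :\: NS -> (y == v) || e v y ->
  2 <= potential y.
Proof.
move=> yv yBNS /orP[/eqP yv'|evy]; first by rewrite yv' eqxx in yv.
rewrite /potential; case: ifP => // /negbT yu.
have yB : y \in B by rewrite !inE yu evy.
have yNS : y \in NS by move: yBNS; rewrite in_setD yB andbT negbK.
by rewrite yNS; case: ifP.
Qed.

Lemma sum_potential_A : \sum_(x in A) potential x = 2 * #|S| + #|A|.
Proof.
rewrite (big_setID S) /= (setIidPr SA) (eq_bigr (fun=> 3) potential_S).
rewrite [X in _ + X](eq_bigr (fun=> 1)) => [|x]; last first.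
  by rewrite !inE => /andP[xS /andP[_ eux]]; apply: potential_nbhd_u.
by rewrite !sum_nat_const cardsD (setIidPr SA); have := subset_leq_card SA; lia.
Qed.

Lemma potential_NS y : y \in NS -> potential y = 2.
Proof.
move=> yNS; have yB := subsetP (nbhd_in_sub e B S) y yNS.
have yS : y \notin S by apply: contraTN yB => /S_notin_B.
by rewrite /potential yNS (negPf yS); move: yB; rewrite !inE => /andP[/negPf ->].
Qed.

Lemma potential_B_NS y : y \in B :\: NS -> potential y = 0.
Proof.
case/setDP=> yB yNS; have yS : y \notin S by apply: contraTN yB => /S_notin_B.
by rewrite /potential (negPf yNS) (negPf yS) yB; move: yB; rewrite !inE => /andP[/negPf ->].
Qed.

Lemma sum_potential_B : \sum_(y in B) potential y = 2 * #|NS|.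
Proof.
rewrite (big_setID NS) /= (setIidPr (nbhd_in_sub e B S)).
by rewrite (eq_bigr _ potential_NS) (eq_bigr _ potential_B_NS) !sum_nat_const muln0 addn0 mulnC.
Qed.

Lemma potential_gap d : regular e d -> #|NS| < #|S| ->
  \sum_(y in nbhd e v) potential y + d <= \sum_(x in nbhd e u) potential x.
Proof.
move=> reg violated.
have d_gt0 : 0 < d by rewrite -(reg u) card_gt0; apply/set0Pn; exists v; rewrite inE.
have vNu : v \in nbhd e u by rewrite inE.
have uNv : u \in nbhd e v by rewrite inE e_sym.
rewrite (big_setD1 v vNu) (big_setD1 u uNv) /=.
rewrite sum_potential_A sum_potential_B potential_u potential_v (card_nbhdD1 reg euv).
lia.
Qed.

Lemma gdist_S_Bout x y : x \in S -> y \in B :\: NS -> 2 < gdist e x y.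
Proof.
move=> xS /setDP[yB yNS].
have eux := S_adj_u xS.
have xv := S_neq_v xS.
have xy : x != y by apply: contraTneq yB => <-; apply: S_notin_B.
move: (yB); rewrite !inE => /andP[yu evy].
apply: gdist_ge3 => //.
- apply: (@uniq_size_le_card _ [:: u; v; x]).
  by rewrite /= !inE negb_or (edge_neq euv) (edge_neq eux) eq_sym xv.
- by apply: contraNN yNS => exy; rewrite inE yB; apply/existsP; exists x; rewrite xS.
move=> z exz; apply/negP=> ezy.
have zu : z != u by apply: contraTneq ezy => ->; apply: B_nadj_u.
have zv : z != v.
  by apply: contraTneq exz => ->; apply: S_nadj_v.
apply: (noC5 (a := u) (b := x) (c := z) (d := y) (f := v)); last first.
  by rewrite eux exz ezy e_sym evy e_sym euv.
rewrite /= !inE !negb_or (edge_neq eux) eq_sym zu eq_sym yu (edge_neq euv).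
by rewrite (edge_neq exz) xy xv (edge_neq ezy) zv eq_sym (edge_neq evy).
Qed.

Lemma potential_lipschitz x y : (x == u) || e u x -> (y == v) || e v y ->
  potential x <= potential y + gdist e x y.
Proof.
move=> Nx Ny; have [<-|xy] := eqVneq x y; first exact: leq_addr.
have xy1 := gdist_ge1 e xy.
have [xS|xNS] := boolP (x \in S).
  rewrite potential_S //; have [yv|yv] := eqVneq y v.
    by subst y; have := gdist_ge2 (S_neq_v xS) (S_nadj_v xS); rewrite potential_v; lia.
  have [yBNS|yBNS] := boolP (y \in B :\: NS); first by have := gdist_S_Bout xS yBNS; lia.
  by have := potential_ge2 yv yBNS Ny; lia.
have [xu|xu] := eqVneq x u; last first.
  have eux : e u x by move: Nx; rewrite (negPf xu).
  by rewrite (potential_nbhd_u eux xNS); lia.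
subst x; rewrite potential_u.
have [yv|yv] := eqVneq y v; first by subst y; rewrite potential_v; lia.
have [yBNS|yBNS] := boolP (y \in B :\: NS); last by have := potential_ge2 yv yBNS Ny; lia.
have /setDP[yB _] := yBNS.
by have := gdist_ge2 xy (B_nadj_u yB); lia.
Qed.

Lemma Wdist_lazy_ge1 (R : realType) d (a : R) : regular e d -> #|NS| < #|S| ->
  (0 <= a <= 1 -> 1 <= Wdist e (lazy_walk e a u) (lazy_walk e a v))%R.
Proof.
move=> reg violated a01.
have nbhd_gt0 w : 0 < #|nbhd e w|.
  by rewrite reg -(reg u) card_gt0; apply/set0Pn; exists v; rewrite inE.
have W_ge : (\sum_x (potential x)%:R * lazy_walk e a u x -
    \sum_y (potential y)%:R * lazy_walk e a v y <= Wdist e (lazy_walk e a u) (lazy_walk e a v))%R.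
  apply: Wdist_ge_potential => [y|y|||x y /lazy_walk_supp Nx /lazy_walk_supp Ny].
  - exact: lazy_walk_ge0.
  - exact: lazy_walk_ge0.
  - exact: lazy_walk_sum1.
  - exact: lazy_walk_sum1.
  by rewrite lerBlDr -natrD ler_nat addnC potential_lipschitz.
apply: le_trans W_ge.
rewrite !sum_lazy_walk // !reg potential_u potential_v -!natr_sum.
have := potential_gap reg violated; rewrite -(ler_nat R) natrD.
have d_gt0 : 0 < d by rewrite -(reg u).
set b := ((1 - a) / d%:R)%R.
have bd : (b * d%:R = 1 - a)%R by rewrite divfK // pnatr_eq0 -lt0n.
have b_ge0 : (0 <= b)%R by rewrite divr_ge0 // subr_ge0; case/andP: a01.
rewrite -subr_ge0 => gap; have := mulr_ge0 b_ge0 gap.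
rewrite !mulrBr mulrDr bd; lra.
Qed.

End DeficientSet.

Local Open Scope ring_scope.

Theorem lemma2p3 (R : realType) (T : finType) (e : rel T) (d : nat) (u v : T) :
  simple_graph e -> connected_graph e -> regular e d ->
  no_C3 e -> no_C5 e ->
  e u v -> 0 < kappa_LLY e R u v ->
  perfect_matching_between e (nbhd e u :\ v) (nbhd e v :\ u).
Proof.
move=> [e_sym e_irr] _ reg noC3 noC5 euv kappa_gt0.
have evu : e v u by rewrite e_sym.
have [hallAB|/existsNP[S /not_implyP[SA /negP]]] :=
  pselect (hall_condition e (nbhd e u :\ v) (nbhd e v :\ u)).
  have [f fm] := hall hallAB; apply: perfect_matching_of_card fm _.
  by rewrite (card_nbhdD1 reg euv) (card_nbhdD1 reg evu).
rewrite -ltnNge => violated.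
suff : kappa_LLY e R u v <= 0 by rewrite leNgt kappa_gt0.
have gdist_uv : gdist e u v = 1%N by apply: gdist_edge (edge_neq e_irr euv) euv.
apply: kappa_LLY_le0 => [|a /andP[a0 a1]]; rewrite gdist_uv //.
by apply: (Wdist_lazy_ge1 e_sym e_irr noC3 noC5 euv SA reg violated); rewrite a0 ltW.
Qed.
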